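(* In the model and protocol $\mathrm{OciorABA}$ described in the context, with $n\ge 3t+1$ and every honest node receiving an input message, if any honest node outputs a value $w$, then every honest node eventually outputs $w$.
   Context: Model: there are $n$ nodes $\mathrm{Node}_1,\dots,\mathrm{Node}_n$ in an asynchronous network (every message sent between honest nodes is eventually delivered, with arbitrary adversarial delay). An adaptive adversary may corrupt at most $t$ nodes in total; $\mathcal F\subseteq[1:n]$ denotes the set of dishonest nodes; $n\ge 3t+1$. The symbol $\bot$ denotes ''missing''; for a vector $v\in\{0,1,\bot\}^n$ let $\mathcal M(v)=\{j\in[1:n]: v[j]\neq\bot\}$. Primitives used as black boxes: (RBC) For each $j\in[1:n]$ a reliable broadcast instance $\mathrm{RBC}_j$ with leader $\mathrm{Node}_j$, satisfying Consistency (two honest outputs are equal), Validity (if the leader is honest and inputs $w$, every honest node eventually outputs $w$), and Totality (if one honest node outputs a value, every honest node eventually outputs a value). (APVA) An asynchronous partial vector agreement instance: each honest $\mathrm{Node}_i$ holds an input vector $a_i\in\{0,1,\bot\}^n$, initially all $\bot$, whose entries may over time change from $\bot$ to a value in $\{0,1\}$ (and are then fixed); each node outputs at most one vector in $\{0,1,\bot\}^n$. It satisfies: Consistency (if an honest node outputs $v$, every honest node eventually outputs $v$); Validity (if an honest node outputs $v$, then for every $j$ with $v[j]\neq\bot$ some honest $\mathrm{Node}_i$ has input $a_i[j]=v[j]$, and $|\mathcal M(v)|\ge n-t$); Termination (if there is a set of at least $n-t$ positions at which all honest nodes have non-missing input entries, then every honest node eventually outputs a vector and terminates). (Erasure code)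 An $(n,t+1)$ erasure code: $\mathrm{Enc}(w)=(\mathrm{Enc}_1(w),\dots,\mathrm{Enc}_n(w))$ and $\mathrm{Dec}$ with $\mathrm{Dec}(\{\mathrm{Enc}_j(w)\}_{j\in K})=w$ for every $K\subseteq[1:n]$, $|K|=t+1$. Protocol $\mathrm{OciorABA}$, code for an honest $\mathrm{Node}_i$ with input message $w_i$: (1) Compute $(y^{(i)}_1,\dots,y^{(i)}_n)=\mathrm{Enc}(w_i)$ and input $y^{(i)}_i$ into $\mathrm{RBC}_i$ (as leader). (2) Upon delivery of $y^{(j)}_j$ from $\mathrm{RBC}_j$ (after step (1)), set $a_i[j]=1$ if $y^{(j)}_j=y^{(i)}_j$ and $a_i[j]=0$ otherwise, and pass $a_i[j]$ into APVA as the $j$-th entry of its input vector. (3) Upon APVA outputting $v$: let $S=\{j: v[j]=1\}$. If $|S|<t+1$, output a default value $\bot$ and terminate. Otherwise let $K$ be the $t+1$ smallest elements of $S$, wait for delivery of $y^{(j)}_j$ from $\mathrm{RBC}_j$ for all $j\in K$, output $\mathrm{Dec}(\{y^{(j)}_j\}_{j\in K})$ and terminate. *)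

From mathcomp Require Import all_boot.
Set Implicit Arguments. Unset Strict Implicit. Unset Printing Implicit Defensive.

(* Conventions:
   - nodes are 'I_n; time is nat (global, abstract; asynchrony = arbitrary
     finite delays, "eventually" = "at some time").
   - F : {set 'I_n} = set of nodes ever corrupted (adaptive adversary), #|F| <= t.
   - rbc i j tau : value output (delivered) by RBC_j at node i by time tau
     (None = not yet delivered).
   - apva_out i tau : vector output by APVA at node i by time tau.
   - a vector in {0,1,bot}^n is a function 'I_n -> option bool (None = bot).
   - protocol outputs are option W, None = default value bot. *)

Definition honest n (F : {set 'I_n}) (i : 'I_n) := i \notin F.

Definition Mset n (v : 'I_n -> option bool) : {set 'I_n} := [set j | v j != None].

Definition apva_input n (W : Type) (Y : eqType) (Enc : W -> 'I_n -> Y)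
  (w_in : 'I_n -> W) (rbc : 'I_n -> 'I_n -> nat -> option Y)
  (i : 'I_n) (tau : nat) (j : 'I_n) : option bool :=
  omap (fun y => y == Enc (w_in i) j) (rbc i j tau).

(* Step (3): output of node i by time tau (None = no output yet). *)
Definition ocior_output n t (W : Type) (Y : eqType) (Dec : seq ('I_n * Y) -> W)
  (rbc : 'I_n -> 'I_n -> nat -> option Y)
  (apva_out : 'I_n -> nat -> option ('I_n -> option bool))
  (i : 'I_n) (tau : nat) : option (option W) :=
  match apva_out i tau with
  | None => None
  | Some v =>
      let S := [seq j <- enum 'I_n | v j == Some true] in
      if size S < t.+1 then Some None
      else
        let K := take t.+1 S in
        if all (fun j => rbc i j tau != None) K
        then Some (Some (Dec (pmap (fun j => omap (pair j) (rbc i j tau)) K)))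
        else None
  end.

Definition erasure_code n t (W : Type) (Y : Type)
  (Enc : W -> 'I_n -> Y) (Dec : seq ('I_n * Y) -> W) : Prop :=
  forall (w : W) (K : seq 'I_n), uniq K -> size K = t.+1 ->
    Dec [seq (j, Enc w j) | j <- K] = w.

Definition RBC_spec n (F : {set 'I_n}) (W : Type) (Y : eqType)
  (Enc : W -> 'I_n -> Y) (w_in : 'I_n -> W)
  (rbc : 'I_n -> 'I_n -> nat -> option Y) : Prop :=
  [/\
      (forall i j tau tau' y, honest F i -> rbc i j tau = Some y -> tau <= tau' ->
         rbc i j tau' = Some y),
      (forall i i' j tau tau' y y', honest F i -> honest F i' ->
         rbc i j tau = Some y -> rbc i' j tau' = Some y' -> y = y'),
      (* Validity: honest leader j inputs y^{(j)}_j = Enc_j(w_j) (step (1)) *)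
      (forall i j, honest F i -> honest F j ->
         exists tau, rbc i j tau = Some (Enc (w_in j) j)) &
      (forall i i' j tau y, honest F i -> honest F i' -> rbc i j tau = Some y ->
         exists tau' y', rbc i' j tau' = Some y')].

Definition APVA_spec n t (F : {set 'I_n})
  (a : 'I_n -> nat -> 'I_n -> option bool)
  (apva_out : 'I_n -> nat -> option ('I_n -> option bool)) : Prop :=
  [/\
      (forall i tau tau' v, honest F i -> apva_out i tau = Some v -> tau <= tau' ->
         apva_out i tau' = Some v),
      (forall i i' tau v, honest F i -> honest F i' -> apva_out i tau = Some v ->
         exists tau', apva_out i' tau' = Some v),
      (forall i tau v, honest F i -> apva_out i tau = Some v ->
         (forall j b, v j = Some b ->
            exists i' tau', honest F i' /\ a i' tau' j = Some b)
         /\ n - t <= #|Mset v|) &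
      ((exists P : {set 'I_n}, n - t <= #|P| /\
          forall j, j \in P -> forall i, honest F i -> exists tau, a i tau j != None) ->
       forall i, honest F i -> exists tau v, apva_out i tau = Some v)].

From mathcomp Require Import all_boot.

Set Implicit Arguments.
Unset Strict Implicit.

(** Node [i] computes its output from its APVA vector and the RBC values it
has delivered.  By APVA consistency and persistence node [i'] eventually holds
the same vector; by RBC totality, consistency and persistence it eventually
holds the same values from every leader [i] used.  Since decoding is a
function of these data, [i'] outputs what [i] did. *)

Lemma eventually_all (I : eqType) (P : I -> nat -> Prop) (s : seq I) (base : nat) :
  (forall j tau tau', P j tau -> tau <= tau' -> P j tau') ->
  {in s, forall j, exists tau, P j tau} ->
  exists2 T, base <= T & {in s, forall j, P j T}.
Proof.
move=> P_mono; elim: s base => [|x s IHs] base ev_s; first by exists base.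
have [tx Px] := ev_s x (mem_head x s).
have [T leT Ps] :=
  IHs (maxn base tx) (fun j js => ev_s j (mem_behead (s := x :: s) js)).
exists T; first exact: leq_trans (leq_maxl base tx) leT.
move=> j; rewrite inE => /predU1P[-> | /Ps //].
exact: P_mono Px (leq_trans (leq_maxr base tx) leT).
Qed.

Section OciorAgreement.

Variables (n t : nat) (W : Type) (Y : eqType) (Dec : seq ('I_n * Y) -> W).
Variables (rbc : 'I_n -> 'I_n -> nat -> option Y)
  (apva_out : 'I_n -> nat -> option ('I_n -> option bool)).

Lemma ocior_output_transfer i tau i' tau' v w :
    apva_out i tau = Some v -> apva_out i' tau' = Some v ->
    {in take t.+1 [seq j <- enum 'I_n | v j == Some true], forall j,
       rbc i j tau != None -> rbc i' j tau' = rbc i j tau} ->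
    ocior_output t Dec rbc apva_out i tau = Some w ->
  ocior_output t Dec rbc apva_out i' tau' = Some w.
Proof.
rewrite /ocior_output => -> -> same_rbc; case: ifP => // _.
case: ifP => // /allP delivered [<-].
have delivered' : all (fun j => rbc i' j tau' != None)
    (take t.+1 [seq j <- enum 'I_n | v j == Some true]).
  by apply/allP => j jK; rewrite same_rbc ?delivered.
rewrite delivered'; congr (Some (Some (Dec _))).
by apply: eq_in_pmap => j jK; rewrite same_rbc ?delivered.
Qed.

Lemma rbc_eventually_agree (F : {set 'I_n}) (Enc : W -> 'I_n -> Y) (w_in : 'I_n -> W)
    i i' tau (s : seq 'I_n) base :
    RBC_spec F Enc w_in rbc -> honest F i -> honest F i' ->
  exists2 T, base <= T &
    {in s, forall j, rbc i j tau != None -> rbc i' j T = rbc i j tau}.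
Proof.
move=> [rbc_persist rbc_consistent _ rbc_total] hi hi'.
apply: eventually_all => [j t1 t2 agree le12 | j _].
  case Hj: (rbc i j tau) agree => [y|] // agree _.
  by rewrite (rbc_persist _ _ _ _ _ hi' (agree isT) le12).
case Hj: (rbc i j tau) => [y|]; last by exists 0.
have [tj [y' Hj']] := rbc_total _ _ _ _ _ hi hi' Hj.
by exists tj; rewrite Hj' (rbc_consistent _ _ _ _ _ _ _ hi hi' Hj Hj').
Qed.

End OciorAgreement.

Theorem theorem6 (n t : nat) (W : Type) (Y : eqType)
  (Enc : W -> 'I_n -> Y) (Dec : seq ('I_n * Y) -> W)
  (F : {set 'I_n}) (w_in : 'I_n -> W)
  (rbc : 'I_n -> 'I_n -> nat -> option Y)
  (apva_out : 'I_n -> nat -> option ('I_n -> option bool)) :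
  3 * t + 1 <= n ->
  #|F| <= t ->
  erasure_code t Enc Dec ->
  RBC_spec F Enc w_in rbc ->
  APVA_spec t F (apva_input Enc w_in rbc) apva_out ->
  forall (i : 'I_n) (tau : nat) (w : option W),
    honest F i -> ocior_output t Dec rbc apva_out i tau = Some w ->
    forall i' : 'I_n, honest F i' ->
      exists tau', ocior_output t Dec rbc apva_out i' tau' = Some w.
Proof.
move=> _ _ _ rbcP [apva_persist apva_consistent _ _] i tau w hi out_i i' hi'.
have [v out_v] : exists v, apva_out i tau = Some v.
  by move: out_i; rewrite /ocior_output; case: (apva_out i tau) => // v; exists v.
have [tau1 out_v'] := apva_consistent _ _ _ _ hi hi' out_v.
have [T leT same_rbc] := rbc_eventually_agree tau
  (take t.+1 [seq j <- enum 'I_n | v j == Some true]) tau1 rbcP hi hi'.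
exists T; apply: ocior_output_transfer out_v _ same_rbc out_i.
exact: apva_persist hi' out_v' leT.
Qed.
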